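(* Let $\Omega\subset\mathbb{R}^d$ be open, $k\in\mathbb{N}\cup\{\infty\}$, $E$ a non-trivial locally convex Hausdorff space over $\mathbb{K}$, $\mathcal{FV}(\Omega)$ a dom-space such that the inclusion $I\colon\mathcal{FV}(\Omega)\to\mathcal{CW}^k(\Omega)$, $f\mapsto f$, is (well-defined and) continuous. If $\mathcal{FV}(\Omega)$ is barrelled, then for all $u\in\mathcal{FV}(\Omega)\varepsilon E$ we have $S(u)\in\mathcal{C}^k(\Omega,E)$ and $(\partial^\beta)^E S(u)(x)=u(\delta_x\circ(\partial^\beta)^{\mathbb{K}})$ for all $\beta\in\mathbb{N}_0^d$ with $|\beta|\le k$ and all $x\in\Omega$.
   Context: $\mathbb{K}\in\{\mathbb{R},\mathbb{C}\}$. For $f\colon\Omega\to E$, $(\partial^{e_n})^E f(x):=\lim_{h\to0}\frac{f(x+he_n)-f(x)}{h}$ in $E$; $f$ is $\mathcal{C}^1$ if these exist and are continuous; $f$ is $\mathcal{C}^k$ if it is $\mathcal{C}^1$ with all first partial derivatives $\mathcal{C}^{k-1}$ ($\mathcal{C}^0$ = continuous), $\mathcal{C}^\infty$ if $\mathcal{C}^k$ for all $k$; $(\partial^\beta)^E:=(\partial^{e_1})^{\beta_1}\cdots(\partial^{e_d})^{\beta_d}$, $|\beta|=\sum\beta_i$. $\mathcal{CW}^k(\Omega)$ is $\mathcal{C}^k(\Omega,\mathbb{K})$ with the topology of uniform convergence of all partial derivatives of order $\le k$ on compact subsets of $\Omega$. Framework: $J,M$ non-empty index sets, $(\omega_m)_{m\in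 M}$ non-empty sets, $\nu_{j,m}\colon\omega_m\to[0,\infty)$ such that for all $m$, $x\in\omega_m$ some $\nu_{j,m}(x)>0$; $\operatorname{AP}(\Omega)\subset\mathbb{K}^\Omega$ a linear subspace; $T_m\colon\operatorname{dom}T_m\to\mathbb{K}^{\omega_m}$ linear maps on linear subspaces of $\mathbb{K}^\Omega$; $\mathcal{FV}(\Omega):=\{f\in\operatorname{AP}(\Omega)\cap\bigcap_m\operatorname{dom}T_m: |f|_{j,m}:=\sup_{x\in\omega_m}|T_m(f)(x)|\nu_{j,m}(x)<\infty\ \forall j,m\}$ with these seminorms. It is a dom-space if it is Hausdorff, the seminorms are directed and every $\delta_x\colon f\mapsto f(x)$ belongs to $\mathcal{FV}(\Omega)'$. $\mathcal{FV}(\Omega)\varepsilon E$: continuous linear maps from $\mathcal{FV}(\Omega)'$ (topology of uniform convergence on absolutely convex compact sets) to $E$, with the topology of uniform convergence on equicontinuous sets; $S(u)(x):=u(\delta_x)$. $\delta_x\circ(\partial^\beta)^{\mathbb{K}}$ denotes $f\mapsto(\partial^\beta)^{\mathbb{K}}f(x)$ on $\mathcal{FV}(\Omega)$. *)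

From HB Require Import structures.
From mathcomp Require Import all_boot all_order all_algebra.
From mathcomp Require Import all_classical all_reals all_analysis.
From mathcomp Require Import complex.
Import Order.TTheory GRing.Theory Num.Theory.
Import numFieldNormedType.Exports.

Set Implicit Arguments.
Unset Strict Implicit.
Unset Printing Implicit Defensive.

Local Open Scope ring_scope.
Local Open Scope classical_set_scope.

Inductive natinf := NFin of nat | NInf.

Definition le_natinf (m : nat) (k : natinf) : Prop :=
  match k with NFin k' => (m <= k')%N | NInf => True end.

Section Defs.
(* R : the real numbers; K : the scalar field (R or C), with the embedding
   iota : R -> K and the (real-valued) absolute value nrm : K -> R. *)
Variables (R : realType) (K : numFieldType) (iota : R -> K) (nrm : K -> R).
Variable d : nat.
Local Notation V := 'rV[R]_d.

(* A function defined on Om, extended by z outside Om (the values outside Om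
   are never used since Om is open; this only serves to write f(x + h e_n)). *)
Definition ext (T : Type) (z : T) (Om : set V) (f : Om -> T) : V -> T :=
  fun y => match pselect (y \in Om) with
           | left h => f (SigSub h)
           | right _ => z end.
Arguments ext {T} z Om f.

Section Derivatives.
Variable W : tvsType K.

Definition dquot (n : 'I_d) (F : V -> W) (x : V) : R -> W :=
  fun h => (iota h)^-1 *: (F (x + h *: 'e_n) - F x).

Definition has_pd (n : 'I_d) (F : V -> W) (x : V) (v : W) : Prop :=
  dquot n F x @ 0^' --> v.

(* the partial derivative (as a value; meaningful when it exists, W Hausdorff) *)
Definition pd (n : 'I_d) (F : V -> W) : V -> W :=
  fun x => xget 0 [set v | has_pd n F x v].

Definition pdb (beta : 'I_d -> nat) (F : V -> W) : V -> W :=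
  foldr (fun i g => (fun G => iter (beta i) (pd i) (g G))) id (enum 'I_d) F.

(* C^k(Om, W) (for functions extended to V; only the values on Om matter) *)
Fixpoint Ck_nat (Om : set V) (k : nat) (F : V -> W) : Prop :=
  match k with
  | 0 => {within Om, continuous F}
  | k'.+1 => (forall (n : 'I_d) (x : V), Om x -> exists v, has_pd n F x v) /\
             (forall n : 'I_d, Ck_nat Om k' (pd n F))
  end.

Definition Ck (Om : set V) (k : natinf) (F : V -> W) : Prop :=
  match k with
  | NFin m => Ck_nat Om m F
  | NInf => forall m, Ck_nat Om m F
  end.

End Derivatives.

Definition mlen (beta : 'I_d -> nat) : nat := (\sum_(i < d) beta i)%N.

Section FV.
Variable Om : set V.
Local Notation Fn := (Om -> K).

Definition lcomb (a : K) (f g : Fn) : Fn := fun x => a * f x + g x.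

Local Unset Implicit Arguments.
Record FVdata := {
  Jt : Type;
  Mt : Type;
  om : Mt -> Type;
  nu : Jt -> forall m : Mt, om m -> R;
  AP : set Fn;
  domT : Mt -> set Fn;
  Top : forall m : Mt, Fn -> (om m -> K)
}.
Local Set Implicit Arguments.

Variable D : FVdata.

Definition lin_subspace (A : set Fn) : Prop :=
  A (fun _ => 0) /\ forall a f g, A f -> A g -> A (lcomb a f g).

Definition FV_framework : Prop :=
  inhabited (Jt D) /\ inhabited (Mt D) /\ (forall m, inhabited (om D m)) /\
  (forall j m x, 0 <= nu D j m x) /\
  (forall m x, exists j, 0 < nu D j m x) /\
  lin_subspace (AP D) /\
  (forall m, lin_subspace (domT D m)) /\
  (forall m a f g, domT D m f -> domT D m g ->
     Top D m (lcomb a f g) = (fun x => a * Top D m f x + Top D m g x)).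

Definition sn_vals (j : Jt D) (m : Mt D) (f : Fn) : set R :=
  range (fun x : om D m => nrm (Top D m f x) * nu D j m x).

Definition FV (f : Fn) : Prop :=
  AP D f /\ (forall m, domT D m f) /\
  (forall j m, has_ubound (sn_vals j m f)).

Definition snorm (j : Jt D) (m : Mt D) (f : Fn) : R := sup (sn_vals j m f).

Definition fsub (g f : Fn) : Fn := fun x => g x - f x.

Definition fv_nbhs (f : Fn) (U : set Fn) : Prop :=
  exists (n : nat) (F : 'I_n -> (Jt D * Mt D)) (e : R), 0 < e /\
    forall g, FV g -> (forall i, snorm (F i).1 (F i).2 (fsub g f) < e) -> U g.

Definition fv_open (U : set Fn) : Prop :=
  forall f, FV f -> U f -> fv_nbhs f U.

Definition fv_closed (A : set Fn) : Prop :=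
  A `<=` FV /\ fv_open (~` A).

Definition fv_compact (A : set Fn) : Prop :=
  A `<=` FV /\
  forall G : set (set Fn), (forall U, G U -> fv_open U) ->
    A `<=` \bigcup_(U in G) U ->
    exists (n : nat) (s : 'I_n -> set Fn),
      (forall i, G (s i)) /\ A `<=` \bigcup_(i in [set: 'I_n]) s i.

Definition fv_hausdorff : Prop :=
  forall f g, FV f -> FV g -> f <> g ->
    exists U U', fv_nbhs f U /\ fv_nbhs g U' /\
      forall h, FV h -> ~ (U h /\ U' h).

Definition fv_directed : Prop :=
  forall (j1 : Jt D) (m1 : Mt D) (j2 : Jt D) (m2 : Mt D),
    exists (j3 : Jt D) (m3 : Mt D) (C : R), 0 < C /\
      forall f, FV f -> Num.max (snorm j1 m1 f) (snorm j2 m2 f) <= C * snorm j3 m3 f.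

Definition abs_convex (A : set Fn) : Prop :=
  forall f g (a b : K), A f -> A g -> nrm a + nrm b <= 1 ->
    A (fun x => a * f x + b * g x).

Definition absorbing (A : set Fn) : Prop :=
  forall f, FV f -> exists r : R, 0 < r /\
    forall a : K, nrm a <= r -> A (fun x => a * f x).

Definition barrel (B : set Fn) : Prop :=
  B `<=` FV /\ fv_closed B /\ abs_convex B /\ absorbing B.

Definition barrelled : Prop :=
  forall B, barrel B -> fv_nbhs (fun _ => 0) B.

(* Elements of the dual FV(Om)': continuous linear functionals on FV(Om),
   represented by functions on K^Om normalized to be 0 outside FV(Om). *)
Definition restrFV (y : Fn -> K) : Fn -> K :=
  fun f => match pselect (FV f) with left _ => y f | right _ => 0 end.

Definition fv_linear_functional (y : Fn -> K) : Prop :=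
  forall a f g, FV f -> FV g -> y (lcomb a f g) = a * y f + y g.

Definition fv_continuous_functional (y : Fn -> K) : Prop :=
  forall f, FV f -> forall e : R, 0 < e ->
    fv_nbhs f (fun g => nrm (y g - y f) < e).

Definition dual (y : Fn -> K) : Prop :=
  fv_linear_functional y /\ fv_continuous_functional y /\
  (forall f, ~ FV f -> y f = 0).

Definition delta (x : V) : Fn -> K := restrFV (fun f => ext 0 Om f x).

Definition dom_space : Prop :=
  fv_hausdorff /\ fv_directed /\ (forall x : Om, dual (delta (val x))).

Definition dual_nbhs (y : Fn -> K) (U : set (Fn -> K)) : Prop :=
  exists (n : nat) (A : 'I_n -> set Fn) (e : R), 0 < e /\
    (forall i, abs_convex (A i) /\ fv_compact (A i)) /\
    forall y', dual y' -> (forall i f, A i f -> nrm (y' f - y f) < e) -> U y'.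

Definition eps_prod (E : tvsType K) (u : (Fn -> K) -> E) : Prop :=
  (forall (a : K) y1 y2, dual y1 -> dual y2 ->
     u (fun f => a * y1 f + y2 f) = a *: u y1 + u y2) /\
  (forall y, dual y -> forall W : set E, nbhs (u y) W ->
     dual_nbhs y (fun y' => W (u y'))).

Definition Smap (E : tvsType K) (u : (Fn -> K) -> E) : Om -> E :=
  fun x => u (delta (val x)).

Definition incl_CWk_continuous (k : natinf) : Prop :=
  (forall f, FV f -> Ck Om k (ext (0 : K^o) Om f)) /\
  (forall f, FV f -> forall Kc : set V, compact Kc -> Kc `<=` Om ->
     forall m : nat, le_natinf m k -> forall e : R, 0 < e ->
       fv_nbhs f (fun g => forall (beta : 'I_d -> nat) (x : V),
          Kc x -> (mlen beta <= m)%N ->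
          nrm (pdb beta (ext (0 : K^o) Om (fsub g f)) x) < e)).

End FV.
End Defs.
Arguments ext {R d T} z Om f _.

Definition prop4_12_for (R : realType) (K : numFieldType) (iota : R -> K)
    (nrm : K -> R) : Prop :=
  forall (d : nat) (Om : set 'rV[R]_d) (k : natinf)
         (D : FVdata R K d Om) (E : tvsType K),
    open Om ->
    hausdorff_space E -> (exists e : E, e <> 0) ->
    FV_framework D -> dom_space nrm D ->
    incl_CWk_continuous iota nrm D k ->
    barrelled nrm D ->
    forall u : ((Om -> K) -> K) -> E, eps_prod nrm D u ->
      Ck iota Om k (ext 0 Om (Smap nrm D u)) /\
      forall (beta : 'I_d -> nat), le_natinf (mlen beta) k ->
        forall x : Om,
          pdb iota beta (ext 0 Om (Smap nrm D u)) (val x) =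
          u (restrFV nrm D
               (fun f => pdb iota beta (ext (0 : K^o) Om f) (val x))).
Arguments prop4_12_for R K iota nrm : clear implicits.

From HB Require Import structures.
From mathcomp Require Import all_boot all_order all_algebra.
From mathcomp Require Import all_classical all_reals all_analysis.
From mathcomp Require Import complex ring lra.
Import Order.TTheory GRing.Theory Num.Theory.
Import numFieldNormedType.Exports.

Local Open Scope ring_scope.
Local Open Scope classical_set_scope.

(* Differentiate S(u) one partial derivative at a time, along
   words w in the directions e_1, ..., e_d.  Suppose that delta_x o d^w is in
   FV(Om)' for all x.  Since every f in FV(Om) is C^k, the difference quotients
   h^-1 (delta_(x + h e_n) - delta_x) o d^w converge weak-* to
   delta_x o d^(n :: w) along any null sequence h.  As FV(Om) is barrelled, the
   Banach-Steinhaus theorem makes such a sequence equicontinuous; hence its limit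
   is again continuous, and the convergence is uniform on compact sets, i.e. it
   holds in FV(Om)'_kappa, where u is continuous.  Applying u, the difference
   quotients of d^w S(u) at x converge to u(delta_x o d^(n :: w)).  The same
   argument along sequences x_j -> x gives the continuity of the derivatives. *)

Section IteratedPartials.
Context {R : realType} {K : numFieldType} (iota : R -> K) {d : nat}.
Local Notation V := 'rV[R]_d.

Definition pdw {W : tvsType K} (w : seq 'I_d) (F : V -> W) : V -> W :=
  foldr (fun n G => pd iota n G) F w.

Lemma pdw_cons {W : tvsType K} w n (F : V -> W) :
  pdw (n :: w) F = pd iota n (pdw w F).
Proof. by []. Qed.

Lemma pdw_rcons {W : tvsType K} w n (F : V -> W) :
  pdw (rcons w n) F = pdw w (pd iota n F).
Proof. by rewrite /pdw foldr_rcons. Qed.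

Definition word_of_multi (beta : 'I_d -> nat) : seq 'I_d :=
  flatten [seq nseq (beta i) i | i <- enum 'I_d].

Lemma pdb_pdw {W : tvsType K} beta (F : V -> W) :
  pdb iota beta F = pdw (word_of_multi beta) F.
Proof.
rewrite /pdb /word_of_multi; elim: (enum 'I_d) => [|i s IH] //=.
by rewrite IH /pdw foldr_cat; elim: (beta i) => //= n ->.
Qed.

Lemma size_word_of_multi beta : size (word_of_multi beta) = mlen beta.
Proof.
rewrite size_flatten /shape -map_comp /mlen sumnE big_map big_enum /=.
by apply: eq_bigr => i _; rewrite /= size_nseq.
Qed.

Lemma Ck_natP {W : tvsType K} (Om : set V) m (F : V -> W) :
  Ck_nat iota Om m F <->
  (forall w, (size w < m)%N -> forall n x, Om x -> exists v, has_pd iota n (pdw w F) x v) /\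
  (forall w, size w = m -> {within Om, continuous (pdw w F)}).
Proof.
elim: m F => [|m IH] F /=.
  by split=> [Fc|[_ Fc]]; [split=> // w /size0nil -> | exact: (Fc [::])].
split=> [[Fd Fpd]|[Fd Fc]].
  split=> w; case/lastP: w => [|w n] //; rewrite size_rcons pdw_rcons.
  - by rewrite ltnS => /((IH _).1 (Fpd n)).1.
  - by case=> /((IH _).1 (Fpd n)).2.
split; first exact: (Fd [::]).
move=> n; apply/IH; split=> w ws; rewrite -pdw_rcons.
  by apply: Fd; rewrite size_rcons ltnS.
by apply: Fc; rewrite size_rcons ws.
Qed.

Lemma has_pdE {W : tvsType K} {n} {F : V -> W} {x v} : hausdorff_space W ->
  has_pd iota n F x v -> pd iota n F x = v.
Proof.
move=> W_T2 Fv; apply: (cvg_unique W_T2 _ Fv).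
exact: (xgetPex 0 (ex_intro (fun v => has_pd iota n F x v) v Fv)).
Qed.

End IteratedPartials.

Lemma cvg_within_sequential {R : realType} {X : pseudoMetricType R} {Y : topologicalType}
    {A B : set X} {x : X} {f : X -> Y} {l : Y} :
  nbhs x B ->
  (forall y : nat -> X, (forall j, A (y j) /\ B (y j)) -> y @ \oo --> x ->
     f (y j) @[j --> \oo] --> l) ->
  f @ within A (nbhs x) --> l.
Proof.
case/nbhs_ballP=> r r0 rB fy W /= Wl; apply: contrapT => notW.
have /choice[y yP] : forall j, exists z,
    [/\ A z, ball x (r * harmonic j) z & ~ W (f z)].
  move=> j; apply: contrapT => noy; apply: notW.
  apply/nbhs_ballP; exists (r * harmonic j) => /=; first by rewrite mulr_gt0 ?harmonic_gt0.
  move=> z xz Az; apply: contrapT => Wz; apply: noy; by exists z.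
have yAB j : A (y j) /\ B (y j).
  have [Ay xy _] := yP j; split=> //; apply: rB; apply: le_ball xy.
  by rewrite ger_pMr // invf_le1 // ler1n.
have yx : y @ \oo --> x.
  apply/cvg_ballP => e e0.
  have := cvg_harmonic (R := R) => /cvgr_dist_lt /(_ (e / r) (divr_gt0 e0 r0)).
  apply: filterS => j; rewrite sub0r normrN ger0_norm ?ltW ?harmonic_gt0 // => hj.
  have [_ xy _] := yP j; apply: le_ball xy.
  by rewrite mulrC -ler_pdivlMr // ltW.
have /filter_ex[j Wj] : \forall j \near \oo, W (f (y j)) := fy y yAB yx W Wl.
by have [_ _] := yP j; apply.
Qed.

Lemma cvg_to_within {T : topologicalType} {A : set T} {x : T} {y : nat -> T} :
  (forall j, A (y j)) -> y @ \oo --> x -> y @ \oo --> within A (nbhs x).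
Proof.
move=> yA yx P /= AP.
have : \forall j \near \oo, A (y j) -> P (y j) := yx _ AP.
by apply: filterS => j; apply.
Qed.

Lemma nonzero_null_seq {R : realType} {B : set R} : nbhs 0 B ->
  exists h : nat -> R, [/\ h @ \oo --> 0, forall j, h j != 0 & forall j, B (h j)].
Proof.
case/nbhs_ballP=> r /= r0 rB; exists (fun j => r / 2 * harmonic j); split=> [|j|j].
- by rewrite -(mulr0 (r / 2)); apply: cvgMl_tmp; exact: cvg_harmonic.
- by apply: mulf_neq0; apply: lt0r_neq0; [rewrite divr_gt0 | exact: harmonic_gt0].
apply: rB; rewrite -ball_normE /= sub0r normrN ger0_norm; last first.
  by rewrite mulr_ge0 ?ltW ?harmonic_gt0 ?divr_gt0.
have hj1 : harmonic j <= 1 :> R by rewrite /= invf_le1 // ler1n.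
apply: (le_lt_trans (y := r / 2)); last by lra.
by rewrite ler_piMr // divr_ge0 // ltW.
Qed.

Section FVSpace.
Variables (R : realType) (K : numFieldType) (nrm : K -> R).
Hypothesis nrm0 : nrm 0 = 0.
Hypothesis nrm_ge0 : forall a, 0 <= nrm a.
Hypothesis nrmD : forall a b, nrm (a + b) <= nrm a + nrm b.
Hypothesis nrmM : forall a b, nrm (a * b) = nrm a * nrm b.
Hypothesis nrmN : forall a, nrm (- a) = nrm a.
Variables (d : nat) (Om : set 'rV[R]_d) (D : FVdata R K d Om).
Hypothesis D_framework : FV_framework D.

Local Notation Fn := (Om -> K).
Local Notation fn0 := (fun _ : Om => 0 : K).
Local Notation FV := (FV nrm D).
Local Notation snorm := (@snorm R K nrm d Om D).
Local Notation dual := (dual nrm D).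
Local Notation fv_nbhs := (fv_nbhs nrm D).
Local Notation nu := (@nu R K d Om D).
Local Notation Top := (@Top R K d Om D).
Local Notation Jt := (@Jt R K d Om D).
Local Notation Mt := (@Mt R K d Om D).

Let nu_ge0 j m x : 0 <= nu j m x.
Proof. by have [_ [_ [_ []]]] := D_framework. Qed.

Let AP_lin : lin_subspace (@AP R K d Om D).
Proof. by have [_ [_ [_ [_ [_ []]]]]] := D_framework. Qed.

Let domT_lin m : lin_subspace (@domT R K d Om D m).
Proof. by have [_ [_ [_ [_ [_ [_ []]]]]]] := D_framework. Qed.

Let Top_lcomb m a f g : @domT R K d Om D m f -> @domT R K d Om D m g ->
  Top m (lcomb a f g) = (fun x => a * Top m f x + Top m g x).
Proof. by have [_ [_ [_ [_ [_ [_ [_]]]]]]] := D_framework; apply. Qed.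

Lemma lcomb_fn0 a : lcomb a fn0 fn0 = fn0.
Proof. by apply/funext => x; rewrite /lcomb mulr0 addr0. Qed.

Lemma fsubE (g f : Fn) : fsub g f = lcomb (-1) f g.
Proof. by apply/funext => x; rewrite /fsub /lcomb mulN1r addrC. Qed.

Lemma scale_lcomb a (f : Fn) : (fun x => a * f x) = lcomb a f fn0.
Proof. by apply/funext => x; rewrite /lcomb addr0. Qed.

Lemma Top_fn0 m : Top m fn0 = (fun _ => 0).
Proof.
have := Top_lcomb m 1 _ _ (domT_lin m).1 (domT_lin m).1; rewrite lcomb_fn0 => T0.
apply/funext => x; have /= /eqP := congr1 (fun F => F x) T0.
by rewrite mul1r -subr_eq subrr eq_sym => /eqP.
Qed.

Lemma FV_lcomb a {f g} : FV f -> FV g -> FV (lcomb a f g).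
Proof.
move=> [APf [Tf Bf]] [APg [Tg Bg]]; split; [exact: AP_lin.2|split].
  by move=> m; apply: (domT_lin m).2.
move=> j m; have [Mf HMf] := Bf j m; have [Mg HMg] := Bg j m.
exists (nrm a * Mf + Mg) => _ [x _ <-]; rewrite Top_lcomb //.
have := HMf _ (imageT (fun x => nrm (Top m f x) * nu j m x) x).
have := HMg _ (imageT (fun x => nrm (Top m g x) * nu j m x) x).
have := nu_ge0 j m x; set n := nu j m x => n0 /= hg hf.
apply: (le_trans (y := (nrm a * nrm (Top m f x) + nrm (Top m g x)) * n)).
  by apply: ler_wpM2r => //; rewrite -nrmM nrmD.
by rewrite mulrDl -mulrA lerD // ler_wpM2l.
Qed.

Lemma FV0 : FV fn0.
Proof.
split; [exact: AP_lin.1|split=> [m|j m]; first exact: (domT_lin m).1].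
by exists 0 => _ [x _ <-]; rewrite Top_fn0 nrm0 mul0r.
Qed.

Lemma FV_fsub {g f} : FV g -> FV f -> FV (fsub g f).
Proof. by move=> Hg Hf; rewrite fsubE; apply: FV_lcomb. Qed.

Lemma FV_scale a {f} : FV f -> FV (fun x => a * f x).
Proof. by move=> Hf; rewrite scale_lcomb; apply: FV_lcomb => //; apply: FV0. Qed.

Lemma FV_comb2 a b {f g} : FV f -> FV g -> FV (fun x => a * f x + b * g x).
Proof. by move=> Hf Hg; apply: FV_lcomb => //; apply: FV_scale. Qed.

Lemma snorm_ub {f} j m x : FV f -> nrm (Top m f x) * nu j m x <= snorm j m f.
Proof.
move=> [_ [_ Bf]]; apply: sup_upper_bound; last exact: imageT.
by split; [exists (nrm (Top m f x) * nu j m x); apply: imageT | exact: Bf].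
Qed.

Lemma snorm_le f j m M : (forall x, nrm (Top m f x) * nu j m x <= M) ->
  snorm j m f <= M.
Proof.
have [_ [_ [om_inh _]]] := D_framework; have [x0] := om_inh m.
move=> fM; apply: ge_sup; first by exists (nrm (Top m f x0) * nu j m x0); apply: imageT.
by move=> _ [x _ <-].
Qed.

Lemma snorm_ge0 f j m : FV f -> 0 <= snorm j m f.
Proof.
have [_ [_ [om_inh _]]] := D_framework; have [x0] := om_inh m.
by move=> Hf; apply: le_trans (snorm_ub j m x0 Hf); rewrite mulr_ge0.
Qed.

Lemma snorm_fsub_tri {f g h} j m : FV f -> FV g -> FV h ->
  snorm j m (fsub h f) <= snorm j m (fsub h g) + snorm j m (fsub g f).
Proof.
move=> Hf Hg Hh; apply: snorm_le => x.
have -> : fsub h f = lcomb 1 (fsub h g) (fsub g f).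
  by apply/funext => y; rewrite /lcomb /fsub mul1r addrA subrK.
have [_ [Thg _]] := FV_fsub Hh Hg; have [_ [Tgf _]] := FV_fsub Hg Hf.
rewrite Top_lcomb // mul1r.
apply: (le_trans (y := (nrm (Top m (fsub h g) x) + nrm (Top m (fsub g f) x)) * nu j m x)).
  exact: ler_wpM2r.
by rewrite mulrDl; apply: lerD; apply: snorm_ub; apply: FV_fsub.
Qed.

Lemma snorm_fsubxx f j m : FV f -> snorm j m (fsub f f) = 0.
Proof.
move=> Hf; have -> : fsub f f = fn0 by apply/funext => y; rewrite /fsub subrr.
apply/eqP; rewrite eq_le snorm_ge0 ?andbT; last exact: FV0.
by apply: snorm_le => x; rewrite Top_fn0 nrm0 mul0r.
Qed.

Lemma fv_nbhsS {f} {U U' : set Fn} : fv_nbhs f U ->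
  (forall g, FV g -> U g -> U' g) -> fv_nbhs f U'.
Proof.
move=> [n [F [e [e0 FU]]]] UU'; exists n, F, e; split=> // g Hg Hs.
by apply: UU' => //; apply: FU.
Qed.

Lemma fv_nbhsI {f} {U U' : set Fn} : fv_nbhs f U -> fv_nbhs f U' ->
  fv_nbhs f (fun g => U g /\ U' g).
Proof.
move=> [n1 [F1 [e1 [e10 FU1]]]] [n2 [F2 [e2 [e20 FU2]]]].
exists (n1 + n2)%N, (fun i => match fintype.split i with inl a => F1 a | inr b => F2 b end).
exists (Order.min e1 e2); split=> [|g Hg Hs]; first by rewrite lt_min e10 e20.
split; [apply: FU1 => // i; have := Hs (lshift n2 i)
       |apply: FU2 => // i; have := Hs (rshift n1 i)].
  by rewrite (unsplitK (inl i)) => /lt_le_trans; apply; rewrite ge_min lexx.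
by rewrite (unsplitK (inr i)) => /lt_le_trans; apply; rewrite ge_min lexx orbT.
Qed.

Definition fv_ball {n} (F : 'I_n -> Jt * Mt) (eta : R) (f0 : Fn) : set Fn :=
  fun g => FV g /\ forall i, snorm (F i).1 (F i).2 (fsub g f0) < eta.

Lemma fv_open_ball {n} (F : 'I_n -> Jt * Mt) eta f0 : 0 < eta -> FV f0 ->
  fv_open nrm D (fv_ball F eta f0).
Proof.
move=> eta0 Hf0 g Hg [_ gF].
pose M := \big[Order.max/0]_i snorm (F i).1 (F i).2 (fsub g f0).
have Mlt : M < eta by apply/bigmax_ltP.
exists n, F, (eta - M); split=> [|g' Hg' g'F]; first by rewrite subr_gt0.
split=> // i; apply: le_lt_trans (snorm_fsub_tri (F i).1 (F i).2 Hf0 Hg Hg') _.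
have : snorm (F i).1 (F i).2 (fsub g f0) <= M by exact: le_bigmax.
by have := g'F i; lra.
Qed.

Lemma restrFV_in y f : FV f -> restrFV nrm D y f = y f.
Proof. by rewrite /restrFV; case: pselect. Qed.

Lemma restrFV_out y f : ~ FV f -> restrFV nrm D y f = 0.
Proof. by rewrite /restrFV; case: pselect. Qed.

Lemma dual_fn0 y : dual y -> y fn0 = 0.
Proof.
move=> [y_lin _]; have /eqP := y_lin 1 _ _ FV0 FV0.
by rewrite lcomb_fn0 mul1r -subr_eq subrr eq_sym => /eqP.
Qed.

Lemma dual_fsubE y g f : dual y -> FV g -> FV f -> y (fsub g f) = y g - y f.
Proof. by move=> [y_lin _] Hg Hf; rewrite fsubE y_lin // mulN1r addrC. Qed.

Lemma dual_scaleE y a f : dual y -> FV f -> y (fun x => a * f x) = a * y f.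
Proof.
by move=> Hy Hf; rewrite scale_lcomb Hy.1 ?dual_fn0 ?addr0 //; apply: FV0.
Qed.

Lemma dual_comb2E y a b f g : dual y -> FV f -> FV g ->
  y (fun x => a * f x + b * g x) = a * y f + b * y g.
Proof.
move=> Hy Hf Hg; have -> : (fun x => a * f x + b * g x) = lcomb a f (fun x => b * g x).
  by [].
by rewrite Hy.1 ?dual_scaleE //; apply: FV_scale.
Qed.

Lemma dual0 : dual (fun _ => 0).
Proof.
have [[j0] [[m0] _]] := D_framework.
split=> [a f g _ _|]; first by rewrite mulr0 addr0.
split=> // f Hf e e0; exists 0%N, (fun _ => (j0, m0)), 1.
by split=> // g _ _; rewrite subrr nrm0.
Qed.

Lemma dual_comb a y1 y2 : dual y1 -> dual y2 -> dual (fun f => a * y1 f + y2 f).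
Proof.
move=> [lin1 [cont1 out1]] [lin2 [cont2 out2]].
split=> [b f g Hf Hg|]; first by rewrite lin1 // lin2 //; ring.
split=> [f Hf e e0|f Hf]; last by rewrite out1 // out2 // mulr0 addr0.
have na0 := nrm_ge0 a; pose e1 := e / (2 * (nrm a + 1)).
have e10 : 0 < e1 by apply: divr_gt0 => //; lra.
have ae1 : (nrm a + 1) * e1 = e / 2 by rewrite /e1; field; lra.
apply: fv_nbhsS (fv_nbhsI (cont1 f Hf e1 e10) (cont2 f Hf (e / 2) _)) _ => [|g Hg [h1 h2]].
  by lra.
have -> : a * y1 g + y2 g - (a * y1 f + y2 f) = a * (y1 g - y1 f) + (y2 g - y2 f).
  by ring.
apply: le_lt_trans (nrmD _ _) _; rewrite nrmM.
have : nrm a * nrm (y1 g - y1 f) <= (nrm a + 1) * e1.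
  by apply: ler_pM; [exact: nrm_ge0|exact: nrm_ge0|lra|exact: ltW].
by lra.
Qed.

Lemma dualZ a y : dual y -> dual (fun f => a * y f).
Proof.
move=> Hy; have -> : (fun f => a * y f) = (fun f => a * y f + 0).
  by apply/funext => f; rewrite addr0.
by apply: dual_comb Hy dual0.
Qed.

Lemma dualB y1 y2 : dual y1 -> dual y2 -> dual (fun f => y1 f - y2 f).
Proof.
move=> H1 H2; have -> : (fun f => y1 f - y2 f) = (fun f => (-1) * y2 f + y1 f).
  by apply/funext => f; rewrite mulN1r addrC.
exact: dual_comb.
Qed.

Section EpsProduct.
Context {E : tvsType K} {u : (Fn -> K) -> E}.
Hypothesis u_eps : eps_prod nrm D u.

Lemma eps_prod0 : u (fun _ => 0) = 0.
Proof.
have /eqP := u_eps.1 1 _ _ dual0 dual0.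
have -> : (fun f : Fn => 1 * 0 + 0 : K) = (fun _ => 0).
  by apply/funext => f; rewrite mulr0 addr0.
by rewrite scale1r -subr_eq subrr eq_sym => /eqP.
Qed.

Lemma eps_prodZ a {y} : dual y -> u (fun f => a * y f) = a *: u y.
Proof.
move=> Hy; have := u_eps.1 a _ _ Hy dual0; rewrite eps_prod0 addr0 => <-.
by congr u; apply/funext => f; rewrite addr0.
Qed.

Lemma eps_prodB {y1 y2} : dual y1 -> dual y2 -> u (fun f => y1 f - y2 f) = u y1 - u y2.
Proof.
move=> H1 H2; have := u_eps.1 (-1) _ _ H2 H1; rewrite scaleN1r addrC => <-.
by congr u; apply/funext => f; rewrite mulN1r addrC.
Qed.

End EpsProduct.

Definition pointwise_bounded (w : nat -> Fn -> K) : Prop :=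
  forall f, FV f -> exists M, forall j, nrm (w j f) <= M.

Definition weakstar_cvg (w : nat -> Fn -> K) (z : Fn -> K) : Prop :=
  forall f, FV f -> forall e, 0 < e -> \forall j \near \oo, nrm (w j f - z f) < e.

Lemma eventually_ub (s : nat -> R) C : (\forall j \near \oo, s j <= C) ->
  exists M, forall j, s j <= M.
Proof.
case=> N _ sC; exists (Order.max C (\big[Order.max/0]_(i < N) s i)) => j.
rewrite le_max; case: (leqP N j) => [/sC -> //|jN]; apply/orP; right.
exact: (@le_bigmax _ _ _ 0 (fun i : 'I_N => s i) (Ordinal jN)).
Qed.

Lemma weakstar_cvg_bounded {w z} : weakstar_cvg w z -> pointwise_bounded w.
Proof.
move=> wz f Hf; apply: (@eventually_ub _ (1 + nrm (z f))).
apply: filterS (wz f Hf 1 ltr01) => j.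
have : nrm (w j f) <= nrm (w j f - z f) + nrm (z f).
  by apply: le_trans (nrmD _ _); rewrite subrK.
by lra.
Qed.

Lemma barrel_equibounded {w eps} : (forall j, dual (w j)) -> pointwise_bounded w ->
  0 < eps -> barrel nrm D (fun g => FV g /\ forall j, nrm (w j g) <= eps).
Proof.
move=> w_dual w_bd eps0; split; first by move=> g [].
split.
  split=> [g []//|f Hf /= notB].
  have [j epsj] : exists j, eps < nrm (w j f).
    apply: contrapT => noj; apply: notB; split=> // j.
    by rewrite leNgt; apply/negP => epsj; apply: noj; exists j.
  have [_ [w_cont _]] := w_dual j.
  apply: fv_nbhsS (w_cont f Hf (nrm (w j f) - eps) _) _; first by rewrite subr_gt0.
  move=> g Hg wg [_ Bg]; have := Bg j.
  have : nrm (w j f) <= nrm (- (w j g - w j f)) + nrm (w j g).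
    by apply: le_trans (nrmD _ _); rewrite opprB subrK.
  by rewrite nrmN; lra.
split.
  move=> f g a b [Hf Bf] [Hg Bg] ab; split; first exact: FV_comb2.
  move=> j; rewrite dual_comb2E //; apply: le_trans (nrmD _ _) _; rewrite !nrmM.
  have := Bf j; have := Bg j; have := nrm_ge0 a; have := nrm_ge0 b.
  by have := nrm_ge0 (w j f); have := nrm_ge0 (w j g); nra.
move=> f Hf; have [M fM] := w_bd f Hf.
have M0 : 0 <= M by apply: le_trans (fM 0%N).
exists (eps / (M + 1)); split=> [|a a_small]; first by apply: divr_gt0 => //; lra.
split=> [|j]; first exact: FV_scale.
rewrite dual_scaleE // nrmM.
have : eps / (M + 1) * (M + 1) = eps by field; lra.
have := fM j; have := nrm_ge0 a; have := nrm_ge0 (w j f).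
have : 0 <= eps / (M + 1) by apply: divr_ge0; lra.
by nra.
Qed.

Section BanachSteinhaus.
Hypothesis D_barrelled : barrelled nrm D.

Lemma barrelled_equicontinuous {w eps} : (forall j, dual (w j)) ->
  pointwise_bounded w -> 0 < eps ->
  exists n (F : 'I_n -> Jt * Mt) eta, 0 < eta /\
    forall g, FV g -> (forall i, snorm (F i).1 (F i).2 g < eta) ->
    forall j, nrm (w j g) <= eps.
Proof.
move=> w_dual w_bd eps0.
have [n [F [eta [eta0 FB]]]] := D_barrelled _ (barrel_equibounded w_dual w_bd eps0).
exists n, F, eta; split=> // g Hg gF; apply: (FB g Hg _).2.
by rewrite (_ : fsub g fn0 = g) //; apply/funext => x; rewrite /fsub subr0.
Qed.

(* Equicontinuity turns convergence at the finitely many centres of a cover of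
   the compact set A by seminorm balls into uniform convergence on A. *)
Lemma weakstar_cvg0_uniform {w A e} : (forall j, dual (w j)) ->
  weakstar_cvg w (fun _ => 0) -> fv_compact nrm D A -> 0 < e ->
  \forall j \near \oo, forall f, A f -> nrm (w j f) < e.
Proof.
move=> w_dual w0 [AFV Acover] e0.
have [n [F [eta [eta0 Fw]]]] :=
  barrelled_equicontinuous w_dual (weakstar_cvg_bounded w0) (divr_gt0 e0 (ltr0Sn _ 2)).
pose G U := exists2 f0, A f0 & U = fv_ball F eta f0.
have [N [s [sG As]]] : exists N (s : 'I_N -> set Fn),
    (forall i, G (s i)) /\ A `<=` \bigcup_(i in [set: 'I_N]) s i.
  apply: Acover => [U [f0 /AFV Hf0 ->]|f Af]; first exact: fv_open_ball.
  exists (fv_ball F eta f); first by exists f.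
  by split=> [|i]; [exact: AFV | rewrite snorm_fsubxx //; exact: AFV].
suff : \forall j \near \oo, forall i g, s i g -> nrm (w j g) < e.
  by apply: filterS => j wj f /As [i _]; apply: wj.
apply: filter_forall => i; have [f0 Af0 ->] := sG i; have Hf0 := AFV _ Af0.
apply: filterS (w0 f0 Hf0 (e / 3) _) => [j wf0 g [Hg gF]|]; last by lra.
have := Fw _ (FV_fsub Hg Hf0) gF j; rewrite dual_fsubE // subr0 in wf0 * => wgf0.
have : nrm (w j g) <= nrm (w j g - w j f0) + nrm (w j f0).
  by apply: le_trans (nrmD _ _); rewrite subrK.
by lra.
Qed.

Lemma weakstar_cvg_uniform {w z A e} : (forall j, dual (w j)) -> dual z ->
  weakstar_cvg w z -> fv_compact nrm D A -> 0 < e ->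
  \forall j \near \oo, forall f, A f -> nrm (w j f - z f) < e.
Proof.
move=> w_dual z_dual wz; apply: (weakstar_cvg0_uniform (w := fun j f => w j f - z f)).
  by move=> j; apply: dualB.
by move=> f Hf e' e'0; apply: filterS (wz f Hf e' e'0) => j; rewrite subr0.
Qed.

Lemma weakstar_cvg_dual {w z} : (forall j, dual (w j)) ->
  fv_linear_functional nrm D z -> (forall f, ~ FV f -> z f = 0) ->
  weakstar_cvg w z -> dual z.
Proof.
move=> w_dual z_lin z_out wz; split=> //; split=> // f Hf e e0.
have [n [F [eta [eta0 Fw]]]] :=
  barrelled_equicontinuous w_dual (weakstar_cvg_bounded wz) (divr_gt0 e0 (ltr0Sn _ 1)).
exists n, F, eta; split=> // g Hg gF.
have Hgf := FV_fsub Hg Hf.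
have [j wj] := filter_ex (wz _ Hgf (e / 2) (divr_gt0 e0 (ltr0Sn _ 1))).
have := Fw _ Hgf gF j.
have -> : z g - z f = z (fsub g f) by rewrite fsubE z_lin // mulN1r addrC.
have : nrm (z (fsub g f)) <= nrm (- (w j (fsub g f) - z (fsub g f))) + nrm (w j (fsub g f)).
  by apply: le_trans (nrmD _ _); rewrite opprB subrK.
by rewrite nrmN; lra.
Qed.

Lemma eps_prod_weakstar_cvg {E : tvsType K} {u : (Fn -> K) -> E} {w z} :
  eps_prod nrm D u -> (forall j, dual (w j)) -> dual z -> weakstar_cvg w z ->
  u (w j) @[j --> \oo] --> u z.
Proof.
move=> u_eps w_dual z_dual wz W /= zW.
have [N [A [e [e0 [A_cpt Aw]]]]] := u_eps.2 z z_dual W zW.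
have : \forall j \near \oo, forall i f, A i f -> nrm (w j f - z f) < e.
  by apply: filter_forall => i; apply: weakstar_cvg_uniform => //; case: (A_cpt i).
by apply: filterS => j /(Aw _ (w_dual j)).
Qed.

Section Representation.
Variable iota : R -> K.
Hypothesis nrm_cvg : forall (s : nat -> K^o) (v : K^o), s @ \oo --> v ->
  forall e, 0 < e -> \forall j \near \oo, nrm (s j - v) < e.
Hypothesis Om_open : open Om.
Hypothesis delta_dual : forall x : Om, dual (delta nrm D (val x)).
Variable m : nat.
Hypothesis FV_Ck : forall f, FV f -> Ck_nat iota Om m (ext (0 : K^o) Om f).

Local Notation V := 'rV[R]_d.
Local Notation extf f := (ext (0 : K^o) Om f).

Definition delta_pdw (w : seq 'I_d) (x : V) : Fn -> K :=
  restrFV nrm D (fun f => pdw iota w (extf f) x).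

Definition delta_pdw_dquot (w : seq 'I_d) (n : 'I_d) (x : V) (h : R) : Fn -> K :=
  fun f => (iota h)^-1 * (delta_pdw w (x + h *: 'e_n) f - delta_pdw w x f).

Lemma ext_lcomb a f g x : Om x -> extf (lcomb a f g) x = a * extf f x + extf g x.
Proof. by move=> Omx; rewrite /ext; case: pselect => // /(_ (mem_set Omx)). Qed.

Lemma Om_nbhs_line n {x} : Om x -> nbhs (0 : R) (fun h => Om (x + h *: 'e_n)).
Proof.
move=> Omx; have Om_x : nbhs x Om by move: Om_open; rewrite openE; apply.
have : x + h *: ('e_n : V) @[h --> (0 : R)] --> x + 0 *: 'e_n.
  by apply: cvgD; [exact: cvg_cst | apply: cvgZr_tmp; exact: cvg_id].
by rewrite scale0r addr0 => /(_ _ Om_x).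
Qed.

Lemma has_pd_pdw_FV {w} n {f x} : (size w < m)%N -> FV f -> Om x ->
  has_pd iota n (pdw iota w (extf f)) x (pdw iota (n :: w) (extf f) x).
Proof.
move=> ws Hf Omx; have [v fv] := ((Ck_natP _ _ _ _).1 (FV_Ck _ Hf)).1 w ws n x Omx.
by rewrite pdw_cons (has_pdE iota (@norm_hausdorff _ K^o) fv).
Qed.

Lemma pdw_lcomb w a f g x : (size w <= m)%N -> FV f -> FV g -> Om x ->
  pdw iota w (extf (lcomb a f g)) x =
  a * pdw iota w (extf f) x + pdw iota w (extf g) x.
Proof.
move=> + Hf Hg; elim: w x => [|n w IH] x ws Omx; first exact: ext_lcomb.
have lcomb_pd : has_pd iota n (pdw iota w (extf (lcomb a f g))) x
    (a * pdw iota (n :: w) (extf f) x + pdw iota (n :: w) (extf g) x).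
  have dquot_eq : \forall h \near 0^',
      a * dquot iota n (pdw iota w (extf f)) x h + dquot iota n (pdw iota w (extf g)) x h
      = dquot iota n (pdw iota w (extf (lcomb a f g))) x h.
    apply: filterS (nbhs_dnbhs (Om_nbhs_line n Omx)) => h Omxh.
    by rewrite /dquot !IH ?(ltnW ws) //; rewrite /GRing.scale /=; ring.
  apply: cvg_trans (near_eq_cvg dquot_eq) _.
  by apply: cvgD; [apply: cvgMl_tmp|]; apply: has_pd_pdw_FV.
by rewrite pdw_cons (has_pdE iota (@norm_hausdorff _ K^o) lcomb_pd).
Qed.

Lemma delta_pdw_dquot_weakstar_cvg w n x (h : nat -> R) : (size w < m)%N -> Om x ->
  h @ \oo --> 0 -> (forall j, h j != 0) ->
  weakstar_cvg (fun j => delta_pdw_dquot w n x (h j)) (delta_pdw (n :: w) x).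
Proof.
move=> ws Omx h0 hn0 f Hf e e0.
have h_punct : h @ \oo --> 0^' := cvg_to_within (A := fun z : R => z != 0) hn0 h0.
have dquot_cvg := cvg_comp _ _ h_punct (has_pd_pdw_FV n ws Hf Omx).
apply: filterS (nrm_cvg _ _ dquot_cvg e e0) => j.
by rewrite /delta_pdw_dquot /delta_pdw !restrFV_in.
Qed.

Lemma dual_delta_pdw_dquot w n x h :
  dual (delta_pdw w (x + h *: 'e_n)) -> dual (delta_pdw w x) ->
  dual (delta_pdw_dquot w n x h).
Proof. by move=> H1 H2; apply: dualZ; apply: dualB. Qed.

Lemma dual_delta_pdw w x : (size w <= m)%N -> Om x -> dual (delta_pdw w x).
Proof.
elim: w x => [|n w IH] x ws Omx; first exact: (delta_dual (SigSub (mem_set Omx))).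
have [h [h0 hn0 hOm]] := nonzero_null_seq (Om_nbhs_line n Omx).
apply: (weakstar_cvg_dual (w := fun j => delta_pdw_dquot w n x (h j))).
- by move=> j; apply: dual_delta_pdw_dquot; apply: IH => //; apply: ltnW.
- move=> a f g Hf Hg; rewrite /delta_pdw !restrFV_in //; last exact: FV_lcomb.
  exact: pdw_lcomb.
- by move=> f Hf; rewrite /delta_pdw restrFV_out.
- exact: delta_pdw_dquot_weakstar_cvg.
Qed.

Variables (E : tvsType K) (u : (Fn -> K) -> E).
Hypothesis E_T2 : hausdorff_space E.
Hypothesis u_eps : eps_prod nrm D u.
Local Notation Su := (ext 0 Om (Smap nrm D u)).

Lemma has_pd_pdw_Smap w n x : (size w < m)%N -> Om x ->
  (forall y, Om y -> pdw iota w Su y = u (delta_pdw w y)) ->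
  has_pd iota n (pdw iota w Su) x (u (delta_pdw (n :: w) x)).
Proof.
move=> ws Omx wSu.
have delta_pdw_dual y : Om y -> dual (delta_pdw w y) by apply: dual_delta_pdw; apply: ltnW.
apply: (cvg_within_sequential (Om_nbhs_line n Omx)) => h hP h0.
have x_dual := delta_pdw_dual _ Omx.
have xh_dual j : dual (delta_pdw w (x + h j *: 'e_n)).
  by apply: delta_pdw_dual; case: (hP j).
have -> : (fun j => dquot iota n (pdw iota w Su) x (h j)) =
    (fun j => u (delta_pdw_dquot w n x (h j))).
  apply/funext => j; have [_ Omxh] := hP j.
  rewrite /dquot (wSu _ Omxh) (wSu _ Omx) /delta_pdw_dquot (eps_prodZ u_eps).
    by congr (_ *: _); apply/esym/eps_prodB.
  exact: dualB.
apply: eps_prod_weakstar_cvg => //; first by move=> j; apply: dual_delta_pdw_dquot.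
  exact: dual_delta_pdw.
by apply: delta_pdw_dquot_weakstar_cvg => // j; case: (hP j).
Qed.

Lemma pdw_Smap {w x} : (size w <= m)%N -> Om x -> pdw iota w Su x = u (delta_pdw w x).
Proof.
elim: w x => [|n w IH] x ws Omx.
  by rewrite /= /ext; case: pselect => // /(_ (mem_set Omx)).
rewrite pdw_cons; apply: has_pdE E_T2 _; apply: has_pd_pdw_Smap => // y Omy.
by apply: IH => //; apply: ltnW.
Qed.

Lemma continuous_pdw_Smap w : size w = m -> {within Om, continuous (pdw iota w Su)}.
Proof.
move=> ws; have ws' : (size w <= m)%N by rewrite ws.
apply/subspace_continuousP => x Omx; rewrite /from_subspace (pdw_Smap ws' Omx).
apply: (cvg_within_sequential (B := setT)) => [|y yP yx]; first exact: filterT.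
have yOm j : Om (y j) by case: (yP j).
have -> : (fun j => pdw iota w Su (y j)) = (fun j => u (delta_pdw w (y j))).
  by apply/funext => j; apply: pdw_Smap.
apply: eps_prod_weakstar_cvg => //;
  [by move=> j; apply: dual_delta_pdw | exact: dual_delta_pdw |].
move=> f Hf e e0.
have /subspace_continuousP /(_ x Omx) pdw_f_cont :=
  ((Ck_natP _ _ _ _).1 (FV_Ck _ Hf)).2 w ws.
have := nrm_cvg _ _ (cvg_comp _ _ (cvg_to_within (A := Om) yOm yx) pdw_f_cont) e e0.
by apply: filterS => j; rewrite /delta_pdw !restrFV_in.
Qed.

Lemma Smap_Ck_nat_pdbE : Ck_nat iota Om m Su /\
  forall beta x, (mlen beta <= m)%N -> Om x ->
    pdb iota beta Su x = u (restrFV nrm D (fun f => pdb iota beta (extf f) x)).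
Proof.
split=> [|beta x beta_m Omx].
  apply/Ck_natP; split=> [w ws n x Omx|]; last exact: continuous_pdw_Smap.
  exists (u (delta_pdw (n :: w) x)); apply: has_pd_pdw_Smap => // y Omy.
  by apply: pdw_Smap => //; apply: ltnW.
rewrite pdb_pdw pdw_Smap ?size_word_of_multi //.
by congr (u (restrFV nrm D _)); apply/funext => f; rewrite pdb_pdw.
Qed.

End Representation.

End BanachSteinhaus.

End FVSpace.

Lemma prop4_12_for_absval (R : realType) (K : numFieldType) (iota : R -> K)
    (nrm : K -> R) :
  nrm 0 = 0 -> (forall a, 0 <= nrm a) ->
  (forall a b, nrm (a + b) <= nrm a + nrm b) ->
  (forall a b, nrm (a * b) = nrm a * nrm b) -> (forall a, nrm (- a) = nrm a) ->
  (forall (s : nat -> K^o) (v : K^o), s @ \oo --> v ->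
     forall e, 0 < e -> \forall j \near \oo, nrm (s j - v) < e) ->
  prop4_12_for R K iota nrm.
Proof.
move=> nrm0 nrm_ge0 nrmD nrmM nrmN nrm_cvg d Om k D E Om_open E_T2 _ D_fw
  [_ [_ delta_dual]] [FV_Ck _] D_barrelled u u_eps.
have Su_Ck m FV_Ck_m := @Smap_Ck_nat_pdbE R K nrm nrm0 nrm_ge0 nrmD nrmM nrmN d Om D
  D_fw D_barrelled iota nrm_cvg Om_open delta_dual m FV_Ck_m E u E_T2 u_eps.
case: k FV_Ck => [m|] FV_Ck.
  have [Su_Ckm Su_pdb] := Su_Ck m FV_Ck.
  by split=> // beta beta_m x; apply: Su_pdb => //; exact: set_valP.
split=> [m|beta _ x]; first exact: (Su_Ck m (fun f Hf => FV_Ck f Hf m)).1.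
by apply: (Su_Ck _ (fun f Hf => FV_Ck f Hf (mlen beta))).2 => //; exact: set_valP.
Qed.

Lemma Re_normc (R : rcfType) (z : R[i]) : ((complex.Re `|z|)%:C)%C = `|z|.
Proof. by apply: RRe_real; apply: normr_real. Qed.

Theorem proposition4p12 (R : realType) :
  prop4_12_for R R (fun r : R => r) (fun z : R => `|z|) /\
  prop4_12_for R R[i] (fun r : R => (r%:C)%C) (fun z : R[i] => complex.Re `|z|).
Proof.
split; apply: prop4_12_for_absval.
- exact: normr0.
- exact: normr_ge0.
- exact: ler_normD.
- exact: normrM.
- exact: normrN.
- move=> s v /cvgr_dist_lt sv e /sv; apply: filterS => j.
  by rewrite distrC.
- by rewrite normr0.
- by move=> a; rewrite -lecR Re_normc; exact: normr_ge0.
- by move=> a b; rewrite -lecR rmorphD /= !Re_normc ler_normD.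
- by move=> a b; apply: complexI; rewrite rmorphM /= !Re_normc normrM.
- by move=> a; rewrite normrN.
move=> s v /cvgr_dist_lt sv e e0.
have /sv : (0 : R[i]) < (e%:C)%C by rewrite ltcR.
by apply: filterS => j; rewrite distrC -ltcR Re_normc.
Qed.
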